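(* For every nonzero ternary cubic form $p\in P_{3,3}$, \[ \frac{\|p\|_\infty}{\|p\|_B}\geq\frac{1}{\sqrt 7}. \] Equality holds if $p=g^*\mathrm{Ch}_{3,3}$ for some $g\in CO(3)$, where $\mathrm{Ch}_{3,3}(x)=x_1^3-3x_1(x_2^2+x_3^2)$.
   Context: $P_{d,n}$ denotes the real vector space of homogeneous polynomials (forms) of degree $d$ in $n$ real variables. For $p\in P_{d,n}$, the uniform norm is $\|p\|_\infty=\max_{\|x\|=1}|p(x)|$, where $\|\cdot\|$ is the Euclidean norm. Writing $p(x)=\sum_{|\alpha|=d}c_\alpha x^\alpha$, the Bombieri norm is \[ \|p\|_B=\Big(\sum_{|\alpha|=d}\binom{d}{\alpha}^{-1}|c_\alpha|^2\Big)^{1/2},\qquad \binom{d}{\alpha}=\frac{d!}{\alpha_1!\cdots\alpha_n!}. \] The conformal orthogonal group is $CO(n)=\mathbb{R}_{>0}\times O(n)$. It acts on $P_{d,n}$ by $(g^*p)(x)=s\,p(\rho^{-1}x)$ for $g=(s,\rho)$. *)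

From Stdlib Require Import Reals Lra Arith List ClassicalEpsilon.
Import ListNotations.
Open Scope R_scope.

Record vec3 := mkV { v1 : R; v2 : R; v3 : R }.

Definition euclid_norm (x : vec3) : R :=
  sqrt (v1 x ^ 2 + v2 x ^ 2 + v3 x ^ 2).

(* A ternary cubic form p ∈ P_{3,3}: one real coefficient c_α for each
   multi-index α = (a,b,c) with a+b+c = 3. *)
Record cubic3 := mkCubic {
  c300 : R; c210 : R; c201 : R; c120 : R; c111 : R;
  c102 : R; c030 : R; c021 : R; c012 : R; c003 : R }.

Definition cubic_zero : cubic3 := mkCubic 0 0 0 0 0 0 0 0 0 0.

Definition coeffs (p : cubic3) : list ((nat * nat * nat) * R) :=
  [ ((3,0,0)%nat, c300 p); ((2,1,0)%nat, c210 p); ((2,0,1)%nat, c201 p);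
    ((1,2,0)%nat, c120 p); ((1,1,1)%nat, c111 p); ((1,0,2)%nat, c102 p);
    ((0,3,0)%nat, c030 p); ((0,2,1)%nat, c021 p); ((0,1,2)%nat, c012 p);
    ((0,0,3)%nat, c003 p) ].

Definition monom (al : nat * nat * nat) (x : vec3) : R :=
  let '(a, b, c) := al in v1 x ^ a * v2 x ^ b * v3 x ^ c.

Definition eval (p : cubic3) (x : vec3) : R :=
  fold_right (fun ac s => snd ac * monom (fst ac) x + s) 0 (coeffs p).

Definition multinom (al : nat * nat * nat) : R :=
  let '(a, b, c) := al in
  INR (fact (a + b + c)) / (INR (fact a) * INR (fact b) * INR (fact c)).

Definition bombieri_norm (p : cubic3) : R :=
  sqrt (fold_right (fun ac s => / multinom (fst ac) * Rabs (snd ac) ^ 2 + s)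
          0 (coeffs p)).

(* Uniform norm ‖p‖_∞ = max_{‖x‖=1} |p(x)|, defined as the least upper bound
   of { |p(x)| : ‖x‖ = 1 } (chosen by classical choice; this lub exists). *)
Definition sphere_values (p : cubic3) (r : R) : Prop :=
  exists x : vec3, euclid_norm x = 1 /\ r = Rabs (eval p x).

Definition uniform_norm (p : cubic3) : R :=
  epsilon (inhabits 0) (fun M => is_lub (sphere_values p) M).

Definition mat3 := nat -> nat -> R.

Definition is_orthogonal (rho : mat3) : Prop :=
  forall i j : nat, (i < 3)%nat -> (j < 3)%nat ->
    rho 0%nat i * rho 0%nat j + rho 1%nat i * rho 1%nat j
      + rho 2%nat i * rho 2%nat j = if Nat.eqb i j then 1 else 0.

(* ρ^{-1} x, which for orthogonal ρ is ρ^T x. *)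
Definition mat_inv_apply (rho : mat3) (x : vec3) : vec3 :=
  mkV (rho 0%nat 0%nat * v1 x + rho 1%nat 0%nat * v2 x + rho 2%nat 0%nat * v3 x)
      (rho 0%nat 1%nat * v1 x + rho 1%nat 1%nat * v2 x + rho 2%nat 1%nat * v3 x)
      (rho 0%nat 2%nat * v1 x + rho 1%nat 2%nat * v2 x + rho 2%nat 2%nat * v3 x).

(* Ch_{3,3}(x) = x1^3 - 3 x1 (x2^2 + x3^2) = x1^3 - 3 x1 x2^2 - 3 x1 x3^2 *)
Definition Ch33 : cubic3 := mkCubic 1 0 0 (-3) 0 (-3) 0 0 0 0.

(* p = g^* q for g = (s, ρ) ∈ CO(3):  p(x) = s q(ρ^{-1} x) for all x
   (a form is determined by its polynomial function). *)
Definition is_CO3_pullback (p q : cubic3) : Prop :=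
  exists (s : R) (rho : mat3), 0 < s /\ is_orthogonal rho /\
    forall x : vec3, eval p x = s * eval q (mat_inv_apply rho x).

From Stdlib Require Import Reals Lra Lia ClassicalEpsilon.
From Stdlib.Reals Require Import Nsatz.
Open Scope R_scope.

(* A cubic p is identified with its symmetric coefficient tensor t_p (entries
   c_α / binom(3,α)), so that p(x) = t_p(x,x,x) and |p|_B is the Frobenius norm
   of t_p.  The inequality is proved for any symmetric 3-tensor t on R^3 whose
   cubic form is bounded by M on the unit sphere:
   1. a Bernstein inequality for binary cubics, obtained from a three-point
      quadrature rule on the circle, bounds t(y,y,y)^2 + t(y,y,u)^2 by M^2 for
      orthonormal y, u;
   2. hence |t(y,y,.)| <= M |y|^2, and a lemma on symmetric 3x3 matrices bounds
      the Hessian defect |H|_F^2 - (tr H)^2 by 2 M^2 |x|^2;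
   3. a cubature identity over the nine directions given by the axes and the
      face diagonals writes 3 |t|_F^2 as an average of these derivative data,
      whence |t|_F^2 <= 7 M^2.
   For the equality case, an orthogonal change of variables does not increase
   the Frobenius norm (Bessel's inequality), so a pullback p = (s,ρ)^* Ch33
   satisfies 7 s^2 <= |p|_B^2 <= 7 |p|_oo^2 <= 7 s^2. *)

(* Vectors of R^3 are functions nat -> R, of which only the entries 0, 1, 2 matter. *)
Definition vec := nat -> R.
Definition sum3 (g : nat -> R) : R := g 0%nat + g 1%nat + g 2%nat.
Definition dot (x y : vec) : R := sum3 (fun i => x i * y i).
Definition nrm2 (x : vec) : R := sum3 (fun i => x i ^ 2).
Definition basis (a : nat) : vec := fun i => if Nat.eqb i a then 1 else 0.
Definition vec_of (a b c : R) : vec :=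
  fun i => match i with 0%nat => a | 1%nat => b | _ => c end.

Lemma sum3_le : forall g h : nat -> R, (forall i, g i <= h i) -> sum3 g <= sum3 h.
Proof. intros g h H. unfold sum3. pose proof (H 0%nat). pose proof (H 1%nat). pose proof (H 2%nat). lra. Qed.

Lemma sum3_ext_lt : forall g h : nat -> R, (forall i, (i < 3)%nat -> g i = h i) -> sum3 g = sum3 h.
Proof. intros g h H. unfold sum3. rewrite !H by lia. reflexivity. Qed.

Lemma nrm2_nonneg : forall x, 0 <= nrm2 x.
Proof. intros x. unfold nrm2, sum3. nra. Qed.

Lemma nrm2_zero : forall x, nrm2 x = 0 -> x 0%nat = 0 /\ x 1%nat = 0 /\ x 2%nat = 0.
Proof. intros x H. unfold nrm2, sum3 in H. nra. Qed.

Lemma nrm2_basis : forall a, (a < 3)%nat -> nrm2 (basis a) = 1.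
Proof. intros a Ha. destruct a as [|[|[|a]]]; try lia; unfold nrm2, sum3, basis; simpl; ring. Qed.

Lemma normalize : forall x, 0 < nrm2 x ->
  exists n u, 0 < n /\ n ^ 2 = nrm2 x /\ nrm2 u = 1 /\ forall i, x i = n * u i.
Proof.
  intros x Hx. exists (sqrt (nrm2 x)), (fun i => x i / sqrt (nrm2 x)).
  pose proof (sqrt_lt_R0 _ Hx) as Hn. pose proof (pow2_sqrt (nrm2 x) ltac:(lra)) as Hn2.
  repeat split; [lra | exact Hn2 | | intros i; field; lra].
  unfold nrm2 in *; unfold sum3 in *. field_simplify; [|lra]. rewrite Hn2. field. lra.
Qed.

Lemma abs_le_bounds : forall x M, Rabs x <= M -> - M <= x <= M.
Proof. intros x M H. unfold Rabs in H. destruct (Rcase_abs x); lra. Qed.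

Lemma abs_le_of_sq : forall q r, 0 <= r -> q ^ 2 <= r ^ 2 -> Rabs q <= r.
Proof. intros q r Hr H. unfold Rabs. destruct (Rcase_abs q); nra. Qed.

(* The binary cubic c0 X^3 + 3 c1 X^2 Y + 3 c2 X Y^2 + c3 Y^3; on the unit circle,
   c0 is its value at (1,0) and 3 c1 its angular derivative there. *)
Definition binary_cubic (c0 c1 c2 c3 X Y : R) : R :=
  c0 * X ^ 3 + 3 * c1 * X ^ 2 * Y + 3 * c2 * X * Y ^ 2 + c3 * Y ^ 3.

Lemma triple_angle : forall t,
  cos (3 * t) = 4 * cos t ^ 3 - 3 * cos t /\ sin (3 * t) = 3 * sin t - 4 * sin t ^ 3.
Proof.
  intros t. replace (3 * t) with (t + (t + t)) by ring.
  repeat rewrite ?cos_plus, ?sin_plus. pose proof (sin2_cos2 t) as H. unfold Rsqr in H.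
  cbn [pow]. split; nsatz.
Qed.

Lemma unit_circle_cube_root : forall a b, a ^ 2 + b ^ 2 = 1 ->
  exists C S, C ^ 2 + S ^ 2 = 1 /\ 4 * C ^ 3 - 3 * C = a /\ 3 * S - 4 * S ^ 3 = b.
Proof.
  intros a b Hab.
  assert (Ha : -1 <= a <= 1) by nra.
  assert (Hs : sin (acos a) = Rabs b).
  { rewrite sin_acos by exact Ha. rewrite <- sqrt_Rsqr_abs. f_equal. unfold Rsqr. nra. }
  pose proof (cos_acos a Ha) as Hc.
  destruct (Rle_dec 0 b) as [Hb|Hb].
  - rewrite Rabs_pos_eq in Hs by lra.
    exists (cos (acos a / 3)), (sin (acos a / 3)).
    destruct (triple_angle (acos a / 3)) as [T1 T2].
    replace (3 * (acos a / 3)) with (acos a) in T1, T2 by field.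
    pose proof (sin2_cos2 (acos a / 3)). unfold Rsqr in *. repeat split; nra.
  - rewrite Rabs_left in Hs by lra.
    exists (cos (- acos a / 3)), (sin (- acos a / 3)).
    destruct (triple_angle (- acos a / 3)) as [T1 T2].
    replace (3 * (- acos a / 3)) with (- acos a) in T1, T2 by field.
    rewrite cos_neg in T1. rewrite sin_neg in T2.
    pose proof (sin2_cos2 (- acos a / 3)). unfold Rsqr in *. repeat split; nra.
Qed.

(* Nine times the weight attached to the node (X,Y) of the three-point
   quadrature rule centred at a point whose tripled angle is (a,b). *)
Definition quad_weight (a b X Y : R) : R := 3 + 6 * a * X + 2 * b * Y.

(* At a node whose own tripled angle is (a,b), the weight equals (4X^2-1)^2. *)
Lemma quad_weight_nonneg : forall X Y, X ^ 2 + Y ^ 2 = 1 ->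
  0 <= quad_weight (4 * X ^ 3 - 3 * X) (3 * Y - 4 * Y ^ 3) X Y.
Proof.
  intros X Y H.
  assert (E : quad_weight (4 * X ^ 3 - 3 * X) (3 * Y - 4 * Y ^ 3) X Y = (4 * X ^ 2 - 1) ^ 2).
  { unfold quad_weight. cbn [pow] in *. nsatz. }
  rewrite E. apply pow2_ge_0.
Qed.

(* With r = ±sqrt 3, (X,Y) is (C,S) rotated by ±2π/3: it stays on the circle
   and has the same tripled angle. *)
Lemma rotation_third_turn : forall C S r X Y,
  C ^ 2 + S ^ 2 = 1 -> r ^ 2 = 3 -> 2 * X = - C - r * S -> 2 * Y = r * C - S ->
  X ^ 2 + Y ^ 2 = 1 /\ 4 * X ^ 3 - 3 * X = 4 * C ^ 3 - 3 * C
  /\ 3 * Y - 4 * Y ^ 3 = 3 * S - 4 * S ^ 3.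
Proof. intros C S r X Y HCS Hr HX HY. cbn [pow] in *. repeat split; nsatz. Qed.

(* The quadrature identity: averaging a binary cubic over the three nodes
   (C,S) and its rotations by ±2π/3 with the weights above recovers the
   inner product of (c0,c1) with the tripled angle (a,b) of (C,S). *)
Lemma three_point_quadrature : forall c0 c1 c2 c3 C S r X1 Y1 X2 Y2,
  C ^ 2 + S ^ 2 = 1 -> r ^ 2 = 3 ->
  2 * X1 = - C - r * S -> 2 * Y1 = r * C - S ->
  2 * X2 = - C - (- r) * S -> 2 * Y2 = (- r) * C - S ->
  let a := 4 * C ^ 3 - 3 * C in let b := 3 * S - 4 * S ^ 3 in
  quad_weight a b C S * binary_cubic c0 c1 c2 c3 C S
  + quad_weight a b X1 Y1 * binary_cubic c0 c1 c2 c3 X1 Y1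
  + quad_weight a b X2 Y2 * binary_cubic c0 c1 c2 c3 X2 Y2 = 9 * (a * c0 + b * c1).
Proof.
  intros c0 c1 c2 c3 C S r X1 Y1 X2 Y2 HCS Hr HX1 HY1 HX2 HY2 a b.
  unfold a, b, quad_weight, binary_cubic. cbn [pow] in *. nsatz.
Qed.

(* If |f| <= M on the unit circle, the inner product of (c0,c1) with the
   tripled angle of any point of the circle is at most M: the quadrature
   identity expresses it as a convex combination of values of f. *)
Lemma tripled_angle_pairing_bound : forall c0 c1 c2 c3 M C S,
  (forall X Y, X ^ 2 + Y ^ 2 = 1 -> Rabs (binary_cubic c0 c1 c2 c3 X Y) <= M) ->
  C ^ 2 + S ^ 2 = 1 -> (4 * C ^ 3 - 3 * C) * c0 + (3 * S - 4 * S ^ 3) * c1 <= M.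
Proof.
  intros c0 c1 c2 c3 M C S Hf HCS.
  set (r := sqrt 3).
  assert (Hr : r ^ 2 = 3) by (apply pow2_sqrt; lra).
  assert (Hr' : (- r) ^ 2 = 3) by (rewrite <- Hr; ring).
  set (X1 := (- C - r * S) / 2). set (Y1 := (r * C - S) / 2).
  set (X2 := (- C - (- r) * S) / 2). set (Y2 := ((- r) * C - S) / 2).
  assert (HX1 : 2 * X1 = - C - r * S) by (unfold X1; field).
  assert (HY1 : 2 * Y1 = r * C - S) by (unfold Y1; field).
  assert (HX2 : 2 * X2 = - C - (- r) * S) by (unfold X2; field).
  assert (HY2 : 2 * Y2 = (- r) * C - S) by (unfold Y2; field).
  destruct (rotation_third_turn C S r X1 Y1 HCS Hr HX1 HY1) as [N1 [A1 B1]].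
  destruct (rotation_third_turn C S (- r) X2 Y2 HCS Hr' HX2 HY2) as [N2 [A2 B2]].
  pose proof (three_point_quadrature c0 c1 c2 c3 C S r X1 Y1 X2 Y2 HCS Hr HX1 HY1 HX2 HY2) as HQ.
  cbv zeta in HQ.
  pose proof (quad_weight_nonneg C S HCS) as W0.
  set (a := 4 * C ^ 3 - 3 * C) in *. set (b := 3 * S - 4 * S ^ 3) in *.
  pose proof (quad_weight_nonneg X1 Y1 N1) as W1. rewrite A1, B1 in W1.
  pose proof (quad_weight_nonneg X2 Y2 N2) as W2. rewrite A2, B2 in W2.
  assert (Wsum : quad_weight a b C S + quad_weight a b X1 Y1 + quad_weight a b X2 Y2 = 9).
  { transitivity (9 + 6 * a * (C + X1 + X2) + 2 * b * (S + Y1 + Y2)); [unfold quad_weight; ring|].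
    unfold X1, X2, Y1, Y2. field. }
  assert (Hnode : forall w X Y, 0 <= w -> X ^ 2 + Y ^ 2 = 1 ->
            w * binary_cubic c0 c1 c2 c3 X Y <= w * M)
    by (intros w X Y Hw HXY; apply Rmult_le_compat_l; [exact Hw | exact (proj2 (abs_le_bounds _ _ (Hf X Y HXY)))]).
  pose proof (Hnode _ C S W0 HCS). pose proof (Hnode _ X1 Y1 W1 N1). pose proof (Hnode _ X2 Y2 W2 N2).
  assert (quad_weight a b C S * M + quad_weight a b X1 Y1 * M + quad_weight a b X2 Y2 * M = 9 * M)
    by (rewrite <- Wsum; ring).
  lra.
Qed.

(* Bernstein-type inequality: if |f| <= M on the unit circle, then
   c0^2 + c1^2 <= M^2.  Apply the previous bound at a point whose tripled
   angle is the direction of (c0,c1). *)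
Lemma binary_cubic_bernstein : forall c0 c1 c2 c3 M,
  (forall X Y, X ^ 2 + Y ^ 2 = 1 -> Rabs (binary_cubic c0 c1 c2 c3 X Y) <= M) ->
  c0 ^ 2 + c1 ^ 2 <= M ^ 2.
Proof.
  intros c0 c1 c2 c3 M Hf.
  destruct (Req_dec (c0 ^ 2 + c1 ^ 2) 0) as [Hz|Hz]; [rewrite Hz; apply pow2_ge_0|].
  set (rho := sqrt (c0 ^ 2 + c1 ^ 2)).
  assert (Hrho : 0 < rho) by (apply sqrt_lt_R0; nra).
  assert (Hrho2 : rho ^ 2 = c0 ^ 2 + c1 ^ 2) by (apply pow2_sqrt; nra).
  destruct (unit_circle_cube_root (c0 / rho) (c1 / rho)) as [C [S [HCS [Ha Hb]]]].
  { field_simplify; [rewrite Hrho2; field|]; lra. }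
  pose proof (tripled_angle_pairing_bound c0 c1 c2 c3 M C S Hf HCS) as H.
  rewrite Ha, Hb in H.
  assert (c0 / rho * c0 + c1 / rho * c1 = rho) as Hval
    by (field_simplify; [rewrite <- Hrho2; field|]; lra).
  rewrite Hval in H. rewrite <- Hrho2. nra.
Qed.

(* A symmetric 3x3 matrix is given by its upper triangle (a00,a01,a02,a11,a12,a22);
   qform is its quadratic form, det3 its determinant and sigma2 the sum of its
   principal 2x2 minors. *)
Definition qform (a00 a01 a02 a11 a12 a22 z0 z1 z2 : R) : R :=
  a00 * z0 ^ 2 + a11 * z1 ^ 2 + a22 * z2 ^ 2 + 2 * a01 * z0 * z1 + 2 * a02 * z0 * z2 + 2 * a12 * z1 * z2.
Definition det3 (a00 a01 a02 a11 a12 a22 : R) : R :=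
  a00 * (a11 * a22 - a12 ^ 2) - a01 * (a01 * a22 - a12 * a02) + a02 * (a01 * a12 - a11 * a02).
Definition sigma2 (a00 a01 a02 a11 a12 a22 : R) : R :=
  a00 * a11 - a01 ^ 2 + a00 * a22 - a02 ^ 2 + a11 * a22 - a12 ^ 2.

(* A coercive (uniformly positive definite) symmetric matrix has a
   nonnegative determinant: its lower 2x2 block has positive determinant and
   the quadratic form evaluated at the adjugate column is det3 times it. *)
Lemma coercive_det_nonneg : forall a00 a01 a02 a11 a12 a22 e, 0 < e ->
  (forall z0 z1 z2, e * (z0 ^ 2 + z1 ^ 2 + z2 ^ 2) <= qform a00 a01 a02 a11 a12 a22 z0 z1 z2) ->
  0 <= det3 a00 a01 a02 a11 a12 a22.
Proof.
  intros a00 a01 a02 a11 a12 a22 e He H.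
  pose proof (H 0 1 0) as H1. unfold qform in H1.
  assert (Ha11 : e <= a11) by nra.
  assert (Hminor : 0 < a11 * a22 - a12 ^ 2).
  { pose proof (H 0 a12 (- a11)) as H3.
    assert (E : qform a00 a01 a02 a11 a12 a22 0 a12 (- a11) = a11 * (a11 * a22 - a12 ^ 2))
      by (unfold qform; ring).
    rewrite E in H3.
    assert (0 < e * (0 ^ 2 + a12 ^ 2 + (- a11) ^ 2)) by (apply Rmult_lt_0_compat; nra).
    apply (Rmult_lt_reg_l a11); lra. }
  set (z0 := a11 * a22 - a12 ^ 2). set (z1 := a02 * a12 - a01 * a22). set (z2 := a01 * a12 - a02 * a11).
  pose proof (H z0 z1 z2) as Hz.
  assert (E : qform a00 a01 a02 a11 a12 a22 z0 z1 z2 = det3 a00 a01 a02 a11 a12 a22 * z0)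
    by (unfold qform, det3, z0, z1, z2; ring).
  rewrite E in Hz.
  apply (Rmult_le_reg_r z0); [exact Hminor|]. nra.
Qed.

(* If |z^T A z| <= m |z|^2, then sigma2(A) >= -m^2: for every t > m both
   t I + A and t I - A are coercive, and det(tI+A) + det(tI-A) = 2t(t^2 + sigma2(A)). *)
Lemma sigma2_lower_bound : forall a00 a01 a02 a11 a12 a22 m, 0 <= m ->
  (forall z0 z1 z2, Rabs (qform a00 a01 a02 a11 a12 a22 z0 z1 z2) <= m * (z0 ^ 2 + z1 ^ 2 + z2 ^ 2)) ->
  - m ^ 2 <= sigma2 a00 a01 a02 a11 a12 a22.
Proof.
  intros a00 a01 a02 a11 a12 a22 m Hm H.
  set (s := sigma2 a00 a01 a02 a11 a12 a22).
  destruct (Rle_dec (- m ^ 2) s) as [Hs|Hs]; [exact Hs|exfalso].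
  set (t := (m + sqrt (- s)) / 2).
  assert (Hsq : m < sqrt (- s)).
  { rewrite <- (sqrt_pow2 m Hm). apply sqrt_lt_1; nra. }
  pose proof (pow2_sqrt (- s) ltac:(nra)) as Hsq2.
  assert (Ht : m < t) by (unfold t; lra).
  assert (Ht2 : t ^ 2 < - s) by (unfold t; nra).
  assert (Coer : forall sg, sg = 1 \/ sg = -1 ->
            0 <= det3 (t + sg * a00) (sg * a01) (sg * a02) (t + sg * a11) (sg * a12) (t + sg * a22)).
  { intros sg Hsg. apply (coercive_det_nonneg _ _ _ _ _ _ (t - m)); [lra|].
    intros z0 z1 z2. pose proof (H z0 z1 z2) as Hz. apply abs_le_bounds in Hz.
    unfold qform in *. destruct Hsg as [-> | ->]; nra. }
  pose proof (Coer 1 (or_introl eq_refl)) as Dp. pose proof (Coer (-1) (or_intror eq_refl)) as Dm.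
  assert (E : det3 (t + 1 * a00) (1 * a01) (1 * a02) (t + 1 * a11) (1 * a12) (t + 1 * a22)
            + det3 (t + -1 * a00) (-1 * a01) (-1 * a02) (t + -1 * a11) (-1 * a12) (t + -1 * a22)
            = 2 * t * (t ^ 2 + s)) by (unfold det3, s, sigma2; ring).
  assert (0 < t) by lra.
  nra.
Qed.

Definition tensor := nat -> nat -> nat -> R.

Definition trilinear (t : tensor) (a b c : vec) : R :=
  sum3 (fun i => sum3 (fun j => sum3 (fun k => t i j k * a i * b j * c k))).

Definition tnorm (t : tensor) : R :=
  sum3 (fun i => sum3 (fun j => sum3 (fun k => t i j k ^ 2))).

Definition occurrences (a i j k : nat) : nat :=
  ((if Nat.eqb i a then 1 else 0) + (if Nat.eqb j a then 1 else 0)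
   + (if Nat.eqb k a then 1 else 0))%nat.

Definition index_type (i j k : nat) : nat * nat * nat :=
  (occurrences 0 i j k, occurrences 1 i j k, occurrences 2 i j k).

Definition sym_tensor (f : nat * nat * nat -> R) : tensor := fun i j k => f (index_type i j k).

Ltac expand_sym := unfold sym_tensor, index_type, occurrences; simpl.

Definition bounded_by (t : tensor) (M : R) : Prop :=
  forall x : vec, nrm2 x = 1 -> Rabs (trilinear t x x x) <= M.

Lemma bounded_by_nonneg : forall t M, bounded_by t M -> 0 <= M.
Proof.
  intros t M H. pose proof (H (basis 0) (nrm2_basis 0 ltac:(lia))).
  pose proof (Rabs_pos (trilinear t (basis 0) (basis 0) (basis 0))). lra.
Qed.

Lemma sym_tensor_plane : forall f (y u : vec) C S,
  let t := sym_tensor f in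
  trilinear t (fun i => C * y i + S * u i) (fun i => C * y i + S * u i) (fun i => C * y i + S * u i)
  = binary_cubic (trilinear t y y y) (trilinear t y y u) (trilinear t y u u) (trilinear t u u u) C S.
Proof. intros. unfold t, binary_cubic, trilinear, sum3. expand_sym. ring. Qed.

Lemma nrm2_plane : forall (y u : vec) C S,
  nrm2 (fun i => C * y i + S * u i) = C ^ 2 * nrm2 y + 2 * C * S * dot y u + S ^ 2 * nrm2 u.
Proof. intros. unfold nrm2, dot, sum3. ring. Qed.

Section DerivativeBounds.

Variables (f : nat * nat * nat -> R) (M : R).
Local Notation t := (sym_tensor f).
Hypothesis bounded : bounded_by t M.

Lemma orthonormal_pair_bound : forall y u : vec,
  nrm2 y = 1 -> nrm2 u = 1 -> dot y u = 0 ->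
  trilinear t y y y ^ 2 + trilinear t y y u ^ 2 <= M ^ 2.
Proof.
  intros y u Hy Hu Hyu.
  apply (binary_cubic_bernstein _ _ (trilinear t y u u) (trilinear t u u u)).
  intros X Y HXY. rewrite <- sym_tensor_plane. apply bounded.
  rewrite nrm2_plane, Hy, Hu, Hyu. lra.
Qed.

Lemma orthogonal_direction_bound : forall y w : vec,
  nrm2 y = 1 -> dot y w = 0 ->
  nrm2 w * trilinear t y y y ^ 2 + trilinear t y y w ^ 2 <= M ^ 2 * nrm2 w.
Proof.
  intros y w Hy Hyw.
  pose proof (nrm2_nonneg w) as Hw0.
  destruct (Req_dec (nrm2 w) 0) as [Hw|Hw].
  - destruct (nrm2_zero w Hw) as [W0 [W1 W2]].
    assert (trilinear t y y w = 0) as -> by (unfold trilinear, sum3; rewrite W0, W1, W2; ring).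
    rewrite Hw. lra.
  - destruct (normalize w ltac:(lra)) as [n [u [Hn [Hn2 [Hu Hwu]]]]].
    assert (Hyu : dot y u = 0).
    { apply (Rmult_eq_reg_l n); [|lra].
      transitivity (dot y w); [unfold dot, sum3; rewrite !Hwu; ring | rewrite Hyw; ring]. }
    assert (trilinear t y y w = n * trilinear t y y u) as ->
      by (unfold trilinear, sum3; rewrite !Hwu; ring).
    pose proof (orthonormal_pair_bound y u Hy Hu Hyu).
    rewrite <- Hn2. nra.
Qed.

(* Gradient bound at a unit vector: |t(y,y,z)| <= M |z|.  Split z into its
   components along y and orthogonal to y and apply Cauchy-Schwarz. *)
Lemma gradient_bound_unit : forall y z : vec,
  nrm2 y = 1 -> trilinear t y y z ^ 2 <= M ^ 2 * nrm2 z.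
Proof.
  intros y z Hy.
  set (a := dot y z). set (w := fun i => z i - a * y i).
  assert (Hyw : dot y w = 0).
  { transitivity (dot y z - a * nrm2 y); [unfold w, dot, nrm2, sum3; ring|].
    rewrite Hy. unfold a. ring. }
  assert (Hz : nrm2 z = a ^ 2 + nrm2 w).
  { transitivity (a ^ 2 + nrm2 w + 2 * a * (dot y z - a * nrm2 y) + a ^ 2 * (nrm2 y - 1));
      [unfold w, dot, nrm2, sum3; ring|].
    rewrite Hy. unfold a. ring. }
  assert (Hlin : trilinear t y y z = a * trilinear t y y y + trilinear t y y w)
    by (unfold w, trilinear, sum3; ring).
  assert (Hy0 : trilinear t y y y ^ 2 <= M ^ 2).
  { pose proof (bounded y Hy) as H. apply abs_le_bounds in H.
    pose proof (bounded_by_nonneg t M bounded). nra. }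
  pose proof (orthogonal_direction_bound y w Hy Hyw) as HK.
  pose proof (nrm2_nonneg w).
  rewrite Hlin, Hz.
  set (T0 := trilinear t y y y) in *. set (T1 := trilinear t y y w) in *. set (N := nrm2 w) in *.
  destruct (Req_dec N 0) as [HN|HN].
  - assert (T1 = 0) as -> by (rewrite HN in HK; nra). rewrite HN. nra.
  - assert (Hcs : N * (a * T0 + T1) ^ 2 <= N * (M ^ 2 * (a ^ 2 + N))).
    { pose proof (pow2_ge_0 (a * T1 - N * T0)). pose proof (pow2_ge_0 a). nra. }
    apply Rmult_le_reg_l in Hcs; lra.
Qed.

Lemma gradient_bound : forall y z : vec,
  trilinear t y y z ^ 2 <= M ^ 2 * nrm2 y ^ 2 * nrm2 z.
Proof.
  intros y z.
  pose proof (nrm2_nonneg y). pose proof (nrm2_nonneg z).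
  destruct (Req_dec (nrm2 y) 0) as [Hy|Hy].
  - destruct (nrm2_zero y Hy) as [Y0 [Y1 Y2]].
    assert (trilinear t y y z = 0) as -> by (unfold trilinear, sum3; rewrite Y0, Y1, Y2; ring).
    rewrite Hy. nra.
  - destruct (normalize y ltac:(lra)) as [n [u [Hn [Hn2 [Hu Hyu]]]]].
    assert (trilinear t y y z = n ^ 2 * trilinear t u u z) as ->
      by (unfold trilinear, sum3; rewrite !Hyu; ring).
    pose proof (gradient_bound_unit u z Hu).
    rewrite <- Hn2. pose proof (pow2_ge_0 (n ^ 2)). nra.
Qed.

(* The squared length of (a third of) the gradient at x. *)
Definition grad_sq (x : vec) : R := sum3 (fun a => trilinear t x x (basis a) ^ 2).

Lemma grad_sq_bound : forall x, grad_sq x <= M ^ 2 * nrm2 x ^ 2.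
Proof.
  intros x.
  set (g := fun a => trilinear t x x (basis a)).
  assert (E1 : trilinear t x x g = grad_sq x) by (unfold g, grad_sq, trilinear, sum3, basis; simpl; ring).
  assert (E2 : nrm2 g = grad_sq x) by reflexivity.
  pose proof (gradient_bound x g) as HK. rewrite E1, E2 in HK.
  pose proof (nrm2_nonneg x).
  assert (HG : 0 <= grad_sq x) by (rewrite <- E2; apply nrm2_nonneg).
  destruct (Req_dec (grad_sq x) 0) as [H0|H0]; [rewrite H0; nra|].
  apply (Rmult_le_reg_l (grad_sq x)); nra.
Qed.

(* A sixth of the Hessian matrix at x, and the quantity |H|_F^2 - (tr H)^2. *)
Definition hess (x : vec) (a b : nat) : R := trilinear t x (basis a) (basis b).

Definition hessian_defect (x : vec) : R :=
  sum3 (fun a => sum3 (fun b => hess x a b ^ 2)) - (sum3 (fun a => hess x a a)) ^ 2.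

(* Since |z^T H z| = |t(z,z,x)| <= M |x| |z|^2 and |H|_F^2 - (tr H)^2 = -2 sigma2(H),
   the bound on sigma2 gives hessian_defect x <= 2 M^2 |x|^2. *)
Lemma hessian_defect_bound : forall x, hessian_defect x <= 2 * M ^ 2 * nrm2 x.
Proof.
  intros x.
  pose proof (bounded_by_nonneg t M bounded) as HM. pose proof (nrm2_nonneg x) as Hx.
  set (m := M * sqrt (nrm2 x)).
  assert (Hm0 : 0 <= m) by (apply Rmult_le_pos; [lra | apply sqrt_pos]).
  assert (Hm2 : m ^ 2 = M ^ 2 * nrm2 x) by (unfold m; rewrite Rpow_mult_distr, pow2_sqrt; lra).
  assert (Hq : forall z0 z1 z2,
    Rabs (qform (hess x 0 0) (hess x 0 1) (hess x 0 2) (hess x 1 1) (hess x 1 2) (hess x 2 2)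
            z0 z1 z2) <= m * (z0 ^ 2 + z1 ^ 2 + z2 ^ 2)).
  { intros z0 z1 z2.
    assert (E : qform (hess x 0 0) (hess x 0 1) (hess x 0 2) (hess x 1 1) (hess x 1 2)
                  (hess x 2 2) z0 z1 z2 = trilinear t (vec_of z0 z1 z2) (vec_of z0 z1 z2) x)
      by (unfold qform, hess, trilinear, sum3, basis, vec_of; expand_sym; ring).
    assert (En : nrm2 (vec_of z0 z1 z2) = z0 ^ 2 + z1 ^ 2 + z2 ^ 2) by (unfold nrm2, sum3, vec_of; ring).
    pose proof (gradient_bound (vec_of z0 z1 z2) x) as HK. rewrite En in HK.
    rewrite E. apply abs_le_of_sq; [apply Rmult_le_pos; nra|].
    rewrite Rpow_mult_distr, Hm2. nra. }
  pose proof (sigma2_lower_bound _ _ _ _ _ _ m Hm0 Hq).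
  assert (hessian_defect x = -2 * sigma2 (hess x 0 0) (hess x 0 1) (hess x 0 2)
                               (hess x 1 1) (hess x 1 2) (hess x 2 2)) as ->
    by (unfold hessian_defect, sigma2, hess, trilinear, sum3, basis; expand_sym; ring).
  lra.
Qed.

Definition probe_energy (x : vec) : R :=
  15 * grad_sq x / nrm2 x ^ 2 + 3 * hessian_defect x / nrm2 x.

Lemma probe_energy_bound : forall x, 0 < nrm2 x -> probe_energy x <= 21 * M ^ 2.
Proof.
  intros x Hx. unfold probe_energy.
  pose proof (grad_sq_bound x). pose proof (hessian_defect_bound x).
  assert (15 * grad_sq x / nrm2 x ^ 2 <= 15 * M ^ 2).
  { apply (Rmult_le_reg_r (nrm2 x ^ 2)); [nra|]. field_simplify; nra. }
  assert (3 * hessian_defect x / nrm2 x <= 6 * M ^ 2).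
  { apply (Rmult_le_reg_r (nrm2 x)); [lra|]. field_simplify; nra. }
  lra.
Qed.

End DerivativeBounds.

(* A cubature formula on the nine directions given by the coordinate axes and
   the face diagonals of the cube: the Frobenius norm of a symmetric tensor is a
   weighted average of probe energies (total weight 3/15 + 12/15 = 1). *)
Lemma cubature : forall f, 3 * tnorm (sym_tensor f) =
  1/15 * (probe_energy f (basis 0) + probe_energy f (basis 1) + probe_energy f (basis 2))
  + 2/15 * (probe_energy f (vec_of 1 1 0) + probe_energy f (vec_of 1 (-1) 0)
          + probe_energy f (vec_of 1 0 1) + probe_energy f (vec_of 1 0 (-1))
          + probe_energy f (vec_of 0 1 1) + probe_energy f (vec_of 0 1 (-1))).
Proof.
  intros f. unfold probe_energy.
  rewrite !nrm2_basis by lia.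
  assert (D : forall a b c, nrm2 (vec_of a b c) = a ^ 2 + b ^ 2 + c ^ 2) by reflexivity.
  rewrite !D.
  unfold grad_sq, hessian_defect, hess, tnorm, trilinear, sum3, basis, vec_of.
  expand_sym. field.
Qed.

Lemma tnorm_le_uniform : forall f M, bounded_by (sym_tensor f) M -> tnorm (sym_tensor f) <= 7 * M ^ 2.
Proof.
  intros f M Hb.
  pose proof (cubature f) as Hc.
  assert (P : forall x, 0 < nrm2 x -> probe_energy f x <= 21 * M ^ 2)
    by (intros x Hx; exact (probe_energy_bound f M Hb x Hx)).
  assert (Dv : forall a b c, nrm2 (vec_of a b c) = a ^ 2 + b ^ 2 + c ^ 2) by reflexivity.
  pose proof (P (basis 0) ltac:(rewrite nrm2_basis by lia; lra)).
  pose proof (P (basis 1) ltac:(rewrite nrm2_basis by lia; lra)).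
  pose proof (P (basis 2) ltac:(rewrite nrm2_basis by lia; lra)).
  pose proof (P (vec_of 1 1 0) ltac:(rewrite Dv; lra)).
  pose proof (P (vec_of 1 (-1) 0) ltac:(rewrite Dv; lra)).
  pose proof (P (vec_of 1 0 1) ltac:(rewrite Dv; lra)).
  pose proof (P (vec_of 1 0 (-1)) ltac:(rewrite Dv; lra)).
  pose proof (P (vec_of 0 1 1) ltac:(rewrite Dv; lra)).
  pose proof (P (vec_of 0 1 (-1)) ltac:(rewrite Dv; lra)).
  lra.
Qed.

Definition coeff_of (p : cubic3) (al : nat * nat * nat) : R :=
  match al with
  | (3, 0, 0) => c300 p | (2, 1, 0) => c210 p | (2, 0, 1) => c201 p
  | (1, 2, 0) => c120 p | (1, 1, 1) => c111 p | (1, 0, 2) => c102 p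
  | (0, 3, 0) => c030 p | (0, 2, 1) => c021 p | (0, 1, 2) => c012 p
  | (0, 0, 3) => c003 p | _ => R0
  end.

Definition coef_tensor (p : cubic3) : tensor :=
  sym_tensor (fun al => coeff_of p al / multinom al).

Definition to_vec3 (x : vec) : vec3 := mkV (x 0%nat) (x 1%nat) (x 2%nat).

Lemma eval_trilinear : forall p x, eval p (to_vec3 x) = trilinear (coef_tensor p) x x x.
Proof. intros p x. unfold eval, coeffs, monom, coef_tensor, trilinear, sum3, multinom. expand_sym. field. Qed.

Lemma tnorm_coef_tensor : forall p, tnorm (coef_tensor p) =
  c300 p ^ 2 + c210 p ^ 2 / 3 + c201 p ^ 2 / 3 + c120 p ^ 2 / 3 + c111 p ^ 2 / 6
  + c102 p ^ 2 / 3 + c030 p ^ 2 + c021 p ^ 2 / 3 + c012 p ^ 2 / 3 + c003 p ^ 2.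
Proof. intros p. unfold tnorm, sum3, coef_tensor, multinom. expand_sym. field. Qed.

Lemma bombieri_norm_tnorm : forall p, bombieri_norm p = sqrt (tnorm (coef_tensor p)).
Proof.
  intros p. rewrite tnorm_coef_tensor. unfold bombieri_norm, coeffs.
  cbn [List.fold_right fst snd]. rewrite !pow2_abs. unfold multinom; simpl. f_equal. field.
Qed.

Lemma tnorm_coef_tensor_pos : forall p, p <> cubic_zero -> 0 < tnorm (coef_tensor p).
Proof.
  intros [a b c d e f g h i j] Hp. rewrite tnorm_coef_tensor. simpl.
  destruct (Rle_lt_dec (a ^ 2 + b ^ 2 / 3 + c ^ 2 / 3 + d ^ 2 / 3 + e ^ 2 / 6 + f ^ 2 / 3
                        + g ^ 2 + h ^ 2 / 3 + i ^ 2 / 3 + j ^ 2) 0) as [H|H]; [|exact H].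
  exfalso. apply Hp. unfold cubic_zero. f_equal; nra.
Qed.

Lemma euclid_norm_eq1 : forall x : vec3,
  euclid_norm x = 1 <-> v1 x ^ 2 + v2 x ^ 2 + v3 x ^ 2 = 1.
Proof.
  intros x. unfold euclid_norm. split; intros H.
  - rewrite <- (sqrt_sqrt (v1 x ^ 2 + v2 x ^ 2 + v3 x ^ 2)), H by nra. ring.
  - rewrite H. apply sqrt_1.
Qed.

Lemma abs_affine_le : forall c m r K, Rabs m <= 1 -> Rabs r <= K -> Rabs (c * m + r) <= Rabs c + K.
Proof.
  intros c m r K Hm Hr. eapply Rle_trans; [apply Rabs_triang|].
  rewrite Rabs_mult. pose proof (Rabs_pos c). pose proof (Rabs_pos m). nra.
Qed.

Lemma abs_mult_le1 : forall m1 m2, Rabs m1 <= 1 -> Rabs m2 <= 1 -> Rabs (m1 * m2) <= 1.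
Proof.
  intros m1 m2 H1 H2. rewrite Rabs_mult.
  pose proof (Rabs_pos m1). pose proof (Rabs_pos m2). nra.
Qed.

(* On the unit sphere every monomial has modulus at most 1, so |p| is bounded
   there by the sum of the moduli of the coefficients. *)
Lemma eval_sphere_bounded : forall p, exists K, forall x, euclid_norm x = 1 -> Rabs (eval p x) <= K.
Proof.
  intros p. eexists. intros x Hx. apply euclid_norm_eq1 in Hx.
  assert (A1 : Rabs (v1 x) <= 1) by (apply abs_le_of_sq; nra).
  assert (A2 : Rabs (v2 x) <= 1) by (apply abs_le_of_sq; nra).
  assert (A3 : Rabs (v3 x) <= 1) by (apply abs_le_of_sq; nra).
  assert (A0 : Rabs 1 <= 1) by (rewrite Rabs_R1; lra).
  unfold eval, coeffs, monom; simpl.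
  repeat (apply abs_affine_le; [repeat apply abs_mult_le1; assumption|]).
  rewrite Rabs_R0. apply Rle_refl.
Qed.

Lemma uniform_norm_lub : forall p, is_lub (sphere_values p) (uniform_norm p).
Proof.
  intros p. unfold uniform_norm. apply epsilon_spec.
  destruct (eval_sphere_bounded p) as [K HK].
  destruct (completeness (sphere_values p)) as [M HM].
  - exists K. intros r [x [Hx ->]]. exact (HK x Hx).
  - exists (Rabs (eval p (mkV 1 0 0))), (mkV 1 0 0). split; [|reflexivity].
    apply euclid_norm_eq1; simpl; ring.
  - exists M. exact HM.
Qed.

Lemma uniform_norm_bounded : forall p, bounded_by (coef_tensor p) (uniform_norm p).
Proof.
  intros p x Hx. rewrite <- eval_trilinear. apply (proj1 (uniform_norm_lub p)).
  exists (to_vec3 x). split; [|reflexivity].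
  apply euclid_norm_eq1. unfold nrm2, sum3 in Hx. simpl. lra.
Qed.

Lemma bombieri_le_uniform : forall p, tnorm (coef_tensor p) <= 7 * uniform_norm p ^ 2.
Proof. intros p. apply tnorm_le_uniform, uniform_norm_bounded. Qed.

Lemma trilinear_ext : forall t (a a' b b' c c' : vec),
  (forall i, a i = a' i) -> (forall i, b i = b' i) -> (forall i, c i = c' i) ->
  trilinear t a b c = trilinear t a' b' c'.
Proof. intros t a a' b b' c c' Ha Hb Hc. unfold trilinear, sum3. rewrite !Ha, !Hb, !Hc. reflexivity. Qed.

Lemma trilinear_basis : forall t i j k, (i < 3)%nat -> (j < 3)%nat -> (k < 3)%nat ->
  trilinear t (basis i) (basis j) (basis k) = t i j k.
Proof.
  intros t i j k Hi Hj Hk.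
  destruct i as [|[|[|i]]]; try lia; destruct j as [|[|[|j]]]; try lia;
    destruct k as [|[|[|k]]]; try lia; unfold trilinear, sum3, basis; simpl; ring.
Qed.

Definition lincomb (a b c : vec) (e1 e2 : R) : vec := fun i => a i + e1 * b i + e2 * c i.

Lemma polarization : forall f (a b c : vec),
  let cube x := trilinear (sym_tensor f) x x x in
  trilinear (sym_tensor f) a b c
  = / 24 * (cube (lincomb a b c 1 1) - cube (lincomb a b c 1 (-1))
            - cube (lincomb a b c (-1) 1) + cube (lincomb a b c (-1) (-1))).
Proof. intros. unfold cube, lincomb, trilinear, sum3. expand_sym. field. Qed.

Lemma tnorm_ext : forall t t' : tensor,
  (forall i j k, (i < 3)%nat -> (j < 3)%nat -> (k < 3)%nat -> t i j k = t' i j k) ->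
  tnorm t = tnorm t'.
Proof. intros t t' H. unfold tnorm, sum3. rewrite !H by lia. reflexivity. Qed.

Definition col (rho : mat3) (i : nat) : vec := fun a => rho a i.
Definition mat_apply (rho : mat3) (v : vec) : vec := fun a => sum3 (fun b => rho a b * v b).

Lemma col_mat_apply : forall rho i, (i < 3)%nat -> forall a, col rho i a = mat_apply rho (basis i) a.
Proof. intros rho i Hi a. destruct i as [|[|[|i]]]; try lia; unfold col, mat_apply, sum3, basis; simpl; ring. Qed.

Lemma orthonormal_columns : forall rho, is_orthogonal rho -> forall i j, (i < 3)%nat -> (j < 3)%nat ->
  dot (col rho i) (col rho j) = if Nat.eqb i j then 1 else 0.
Proof. intros rho H. exact H. Qed.

Lemma inv_apply_mat_apply : forall rho, is_orthogonal rho -> forall v,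
  mat_inv_apply rho (to_vec3 (mat_apply rho v)) = to_vec3 v.
Proof.
  intros rho H v.
  assert (E : forall i, (i < 3)%nat ->
            sum3 (fun a => rho a i * mat_apply rho v a) = v i).
  { intros i Hi.
    transitivity (sum3 (fun b => dot (col rho i) (col rho b) * v b));
      [unfold mat_apply, dot, col, sum3; ring|].
    unfold sum3 at 1. rewrite !(orthonormal_columns rho H i) by lia.
    destruct i as [|[|[|i]]]; try lia; simpl; ring. }
  unfold mat_inv_apply, to_vec3. simpl.
  rewrite <- (E 0%nat), <- (E 1%nat), <- (E 2%nat) by lia. reflexivity.
Qed.

Lemma bessel : forall rho, is_orthogonal rho -> forall v,
  sum3 (fun i => dot (col rho i) v ^ 2) <= nrm2 v.
Proof.
  intros rho H v.
  set (d := fun i => dot (col rho i) v).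
  set (w := fun a => v a - sum3 (fun i => d i * rho a i)).
  assert (E : nrm2 w = nrm2 v - 2 * sum3 (fun i => d i ^ 2)
                       + sum3 (fun i => sum3 (fun j => d i * d j * dot (col rho i) (col rho j))))
    by (unfold w, d, nrm2, dot, col, sum3; ring).
  rewrite (sum3_ext_lt (fun i => sum3 (fun j => d i * d j * dot (col rho i) (col rho j))) (fun i => d i ^ 2)) in E.
  - pose proof (nrm2_nonneg w). change (sum3 (fun i => d i ^ 2) <= nrm2 v). lra.
  - intros i Hi. unfold sum3. rewrite !(orthonormal_columns rho H i) by lia.
    destruct i as [|[|[|i]]]; try lia; simpl; ring.
Qed.

(* Contract the first index of a tensor with the columns of ρ, moving it to
   the last position; three turns transform all three indices. *)
Definition turn (rho : mat3) (t : tensor) : tensor :=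
  fun j k i => dot (col rho i) (fun a => t a j k).

(* A turn by a matrix with orthonormal columns does not increase the
   Frobenius norm (Bessel's inequality along each fibre). *)
Lemma tnorm_turn_le : forall rho t, is_orthogonal rho -> tnorm (turn rho t) <= tnorm t.
Proof.
  intros rho t H.
  apply Rle_trans with (sum3 (fun j => sum3 (fun k => nrm2 (fun a => t a j k)))).
  - apply sum3_le; intros j. apply sum3_le; intros k. apply (bessel rho H).
  - right. unfold nrm2, tnorm, sum3. ring.
Qed.

Lemma turn3_trilinear : forall rho t i j k,
  turn rho (turn rho (turn rho t)) i j k = trilinear t (col rho i) (col rho j) (col rho k).
Proof. intros. unfold turn, trilinear, dot, col, sum3. ring. Qed.

(* If p(x) = s q(ρ^{-1} x), then the trilinear forms satisfy
   t_p(ρa, ρb, ρc) = s t_q(a, b, c), by polarization. *)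
Lemma pullback_trilinear : forall p q s rho, is_orthogonal rho ->
  (forall x, eval p x = s * eval q (mat_inv_apply rho x)) ->
  forall a b c, trilinear (coef_tensor p) (mat_apply rho a) (mat_apply rho b) (mat_apply rho c)
                = s * trilinear (coef_tensor q) a b c.
Proof.
  intros p q s rho Ho Hpq a b c.
  assert (Hcube : forall e1 e2,
    let v := lincomb a b c e1 e2 in
    let w := lincomb (mat_apply rho a) (mat_apply rho b) (mat_apply rho c) e1 e2 in
    trilinear (coef_tensor p) w w w = s * trilinear (coef_tensor q) v v v).
  { intros e1 e2 v w. rewrite <- !eval_trilinear, Hpq.
    replace (to_vec3 w) with (to_vec3 (mat_apply rho v))
      by (unfold to_vec3, w, v, lincomb, mat_apply, sum3; f_equal; ring).
    rewrite inv_apply_mat_apply by exact Ho. reflexivity. }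
  unfold coef_tensor.
  rewrite (polarization _ (mat_apply rho a) (mat_apply rho b) (mat_apply rho c)), (polarization _ a b c).
  fold (coef_tensor p) (coef_tensor q).
  cbv zeta in Hcube. rewrite !Hcube. ring.
Qed.

Lemma pullback_tnorm_ge : forall p q s rho, is_orthogonal rho ->
  (forall x, eval p x = s * eval q (mat_inv_apply rho x)) ->
  s ^ 2 * tnorm (coef_tensor q) <= tnorm (coef_tensor p).
Proof.
  intros p q s rho Ho Hpq.
  set (tp := coef_tensor p).
  assert (Hturn : tnorm (turn rho (turn rho (turn rho tp))) = s ^ 2 * tnorm (coef_tensor q)).
  { rewrite (tnorm_ext _ (fun i j k => s * coef_tensor q i j k)).
    - unfold tnorm, sum3. ring.
    - intros i j k Hi Hj Hk. rewrite turn3_trilinear.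
      rewrite (trilinear_ext tp _ (mat_apply rho (basis i)) _ (mat_apply rho (basis j))
                 _ (mat_apply rho (basis k))) by (apply col_mat_apply; assumption).
      unfold tp. rewrite (pullback_trilinear p q s rho Ho Hpq), trilinear_basis by assumption.
      reflexivity. }
  rewrite <- Hturn.
  apply Rle_trans with (tnorm (turn rho (turn rho tp))); [apply tnorm_turn_le; exact Ho|].
  apply Rle_trans with (tnorm (turn rho tp)); apply tnorm_turn_le; exact Ho.
Qed.

Lemma tnorm_Ch33 : tnorm (coef_tensor Ch33) = 7.
Proof. rewrite tnorm_coef_tensor. unfold Ch33; simpl. field. Qed.

(* |Ch(y)| <= 1 on the unit ball, since Ch(y)^2 = |y|^6 - (y2^2+y3^2)(3y1^2 - y2^2 - y3^2)^2. *)
Lemma Ch33_bound : forall y, v1 y ^ 2 + v2 y ^ 2 + v3 y ^ 2 <= 1 -> Rabs (eval Ch33 y) <= 1.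
Proof.
  intros y Hy.
  set (a := v1 y ^ 2). set (w := v2 y ^ 2 + v3 y ^ 2).
  assert (Ha : 0 <= a) by (unfold a; nra). assert (Hw : 0 <= w) by (unfold w; nra).
  apply abs_le_of_sq; [lra|].
  assert (E : eval Ch33 y ^ 2 = (a + w) ^ 3 - w * (3 * a - w) ^ 2)
    by (unfold a, w, eval, Ch33, coeffs, monom; simpl; ring).
  rewrite E.
  assert (0 <= w * (3 * a - w) ^ 2) by (apply Rmult_le_pos; [lra | apply pow2_ge_0]).
  assert ((a + w) ^ 3 <= 1) by (rewrite <- (pow1 3); apply pow_incr; unfold a, w in *; lra).
  lra.
Qed.

(* For p = (s, ρ)^* Ch33, |p|_oo <= s: ρ^{-1} maps the unit sphere into the unit ball. *)
Lemma pullback_Ch33_uniform_le : forall p s rho, 0 < s -> is_orthogonal rho ->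
  (forall x, eval p x = s * eval Ch33 (mat_inv_apply rho x)) -> uniform_norm p <= s.
Proof.
  intros p s rho Hs Ho Hp.
  apply (proj2 (uniform_norm_lub p)). intros r [x [Hx ->]].
  rewrite Hp, Rabs_mult, (Rabs_pos_eq s) by lra.
  assert (Rabs (eval Ch33 (mat_inv_apply rho x)) <= 1).
  { apply Ch33_bound. apply euclid_norm_eq1 in Hx.
    pose proof (bessel rho Ho (vec_of (v1 x) (v2 x) (v3 x))) as HB.
    unfold nrm2, dot, col, sum3, vec_of in HB; simpl in HB.
    unfold mat_inv_apply; simpl. lra. }
  pose proof (Rabs_pos (eval Ch33 (mat_inv_apply rho x))). nra.
Qed.

(* Pullbacks of Ch33 are extremal: |p|_B^2 = 7 |p|_oo^2, squeezed between
   7 s^2 <= |p|_B^2 (orthogonal invariance) and |p|_B^2 <= 7 |p|_oo^2 <= 7 s^2. *)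
Lemma pullback_Ch33_extremal : forall p, is_CO3_pullback p Ch33 ->
  tnorm (coef_tensor p) = 7 * uniform_norm p ^ 2 /\ 0 < uniform_norm p.
Proof.
  intros p [s [rho [Hs [Ho Hp]]]].
  pose proof (pullback_Ch33_uniform_le p s rho Hs Ho Hp) as Hle.
  pose proof (pullback_tnorm_ge p Ch33 s rho Ho Hp) as Hge. rewrite tnorm_Ch33 in Hge.
  pose proof (bombieri_le_uniform p) as Hbu.
  pose proof (bounded_by_nonneg _ _ (uniform_norm_bounded p)) as HM.
  assert (uniform_norm p = s) by nra.
  split; nra.
Qed.

Lemma ratio_lower_bound : forall F M, 0 < F -> F <= 7 * M ^ 2 -> 0 <= M -> M / sqrt F >= 1 / sqrt 7.
Proof.
  intros F M HF HFM HM.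
  pose proof (sqrt_lt_R0 F HF). pose proof (sqrt_lt_R0 7 ltac:(lra)).
  assert (sqrt F <= sqrt 7 * M)
    by (rewrite <- (sqrt_pow2 M HM), <- sqrt_mult by lra; apply sqrt_le_1; lra).
  apply Rle_ge. apply (Rmult_le_reg_r (sqrt F * sqrt 7)); [nra|].
  replace (1 / sqrt 7 * (sqrt F * sqrt 7)) with (sqrt F) by (field; lra).
  replace (M / sqrt F * (sqrt F * sqrt 7)) with (sqrt 7 * M) by (field; lra).
  lra.
Qed.

Lemma ratio_equality : forall M, 0 < M -> M / sqrt (7 * M ^ 2) = 1 / sqrt 7.
Proof.
  intros M HM. pose proof (sqrt_lt_R0 7 ltac:(lra)).
  rewrite sqrt_mult, sqrt_pow2 by nra. field. lra.
Qed.

Theorem theorem1p2 :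
  (forall p : cubic3, p <> cubic_zero ->
     uniform_norm p / bombieri_norm p >= 1 / sqrt 7) /\
  (forall p : cubic3, is_CO3_pullback p Ch33 ->
     uniform_norm p / bombieri_norm p = 1 / sqrt 7).
Proof.
  split.
  - intros p Hp. rewrite bombieri_norm_tnorm.
    apply ratio_lower_bound.
    + exact (tnorm_coef_tensor_pos p Hp).
    + exact (bombieri_le_uniform p).
    + exact (bounded_by_nonneg _ _ (uniform_norm_bounded p)).
  - intros p Hpb. destruct (pullback_Ch33_extremal p Hpb) as [HF HM].
    rewrite bombieri_norm_tnorm, HF. exact (ratio_equality _ HM).
Qed.
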